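(* Let $\mathcal{H}_A,\mathcal{H}_B$ be finite-dimensional Hilbert spaces with a fixed reference basis $\{|i\rangle_A\}$ of $\mathcal{H}_A$. For every state $\rho_{AB}$ on $\mathcal{H}_A\otimes\mathcal{H}_B$ with reduced state $\rho_A$, $$C^{A|B}_{l_1}(\rho_{AB})^2-C_{l_1}(\rho_A)^2\geq 2\left(\mathrm{Tr}\,\rho_{AB}^2-\mathrm{Tr}\,\rho_A^2\right).$$
   Context: $C_{l_1}(\rho_A)=\sum_{i\neq j}|\langle i|\rho_A|j\rangle|$. Writing $\rho_{AB}=\sum_{i,j}|i\rangle\langle j|_A\otimes\rho^B_{ij}$ with $\rho^B_{ij}=\langle i|\rho_{AB}|j\rangle_A$, $C^{A|B}_{l_1}(\rho_{AB})=\sum_{i\neq j}\|\rho^B_{ij}\|_{\mathrm{tr}}$, where $\|X\|_{\mathrm{tr}}=\mathrm{Tr}\sqrt{X^\dagger X}$. *)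

From HB Require Import structures.
From mathcomp Require Import all_boot all_order all_algebra.
From mathcomp Require Import reals.
From mathcomp.real_closed Require Import complex.
From Stdlib Require Import ClassicalEpsilon.
Set Implicit Arguments. Unset Strict Implicit. Unset Printing Implicit Defensive.
Import Order.TTheory GRing.Theory Num.Theory.
Local Open Scope ring_scope.

Section QDefs.
Variable R : realType.
Local Notation C := (R[i]).

Definition adjmx (p q : nat) (A : 'M[C]_(p, q)) : 'M[C]_(q, p) :=
  map_mx Num.conj A^T.

Definition psdmx (p : nat) (A : 'M[C]_p) : Prop :=
  adjmx A = A /\ forall v : 'cV[C]_p, 0 <= (adjmx v *m A *m v) 0 0.

Definition density (p : nat) (A : 'M[C]_p) : Prop := psdmx A /\ \tr A = 1.

(* the (unique) positive semidefinite square root of a matrix M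
   (meaningful for M psd, where it exists and is unique) *)
Definition msqrt (p : nat) (M : 'M[C]_p) : 'M[C]_p :=
  epsilon (inhabits 0) (fun P => psdmx P /\ P *m P = M).

Definition trnorm (p q : nat) (X : 'M[C]_(p, q)) : C :=
  \tr (msqrt (adjmx X *m X)).

(* H_A (x) H_B with dim H_A = m, dim H_B = n; basis |i>|k> is indexed by
   mxvec_index i k : 'I_(m * n). *)
Definition blockB (m n : nat) (rho : 'M[C]_(m * n)) (i j : 'I_m) : 'M[C]_n :=
  \matrix_(k, l) rho (mxvec_index i k) (mxvec_index j l).

Definition ptraceB (m n : nat) (rho : 'M[C]_(m * n)) : 'M[C]_m :=
  \matrix_(i, j) \tr (blockB rho i j).

Definition Cl1 (m : nat) (rhoA : 'M[C]_m) : C :=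
  \sum_(i < m) \sum_(j < m | i != j) `|rhoA i j|.

Definition Cl1AB (m n : nat) (rho : 'M[C]_(m * n)) : C :=
  \sum_(i < m) \sum_(j < m | i != j) trnorm (blockB rho i j).

End QDefs.

From HB Require Import structures.
From mathcomp Require Import all_boot all_order all_algebra.
From mathcomp Require Import reals.
From mathcomp.real_closed Require Import complex.
From Stdlib Require Import ClassicalEpsilon.
Set Implicit Arguments. Unset Strict Implicit. Unset Printing Implicit Defensive.
Import Order.TTheory GRing.Theory Num.Theory.
Local Open Scope ring_scope.

(** Write t_ij = ||rho_ij||_tr, c_ij = |Tr rho_ij| and f_ij = Tr (rho_ij^* rho_ij)
    for the blocks of rho.  Then Tr rho^2 = sum_ij f_ij, Tr rho_A^2 = sum_ij c_ij^2,
    and the two coherences are the off-diagonal sums of t and c.  The trace norm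
    dominates both |Tr X| and the Frobenius norm, so c_ij <= t_ij and
    f_ij = f_ji <= t_ij t_ji; the diagonal blocks are positive, so f_ii <= c_ii^2.
    Expanding the squares of the off-diagonal sums and keeping only the cross
    terms (ij, ij) and (ij, ji), each off-diagonal pair contributes at least
    t_ij^2 + t_ij t_ji - 2 c_ij^2 >= 2 (f_ij - c_ij^2). *)

Section SquaredSums.
Variable K : numDomainType.

Lemma sqr_sumB_sqr_sum (I : finType) (P : pred I) (a b : I -> K) :
  (\sum_(x | P x) a x) ^+ 2 - (\sum_(x | P x) b x) ^+ 2 =
  \sum_(x | P x) \sum_(y | P y) (a x * a y - b x * b y).
Proof.
rewrite !expr2 !mulr_suml -sumrB; apply: eq_bigr => x _.
by rewrite !mulr_sumr -sumrB.
Qed.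

Lemma sqr_sumB_sqr_sum_ge_paired (I : finType) (P : pred I) (s : I -> I)
    (t c : I -> K) :
  (forall x, P x -> P (s x) && (s x != x)) -> (forall x, 0 <= c x <= t x) ->
  \sum_(x | P x) ((t x * t x - c x * c x) + (t x * t (s x) - c x * c (s x))) <=
  (\sum_(x | P x) t x) ^+ 2 - (\sum_(x | P x) c x) ^+ 2.
Proof.
move=> sP ct; rewrite sqr_sumB_sqr_sum; apply: ler_sum => x Px.
have /andP[Psx sx_neq_x] := sP x Px.
rewrite (bigD1 x) //= (bigD1 (s x)) /=; last by rewrite Psx.
rewrite [X in _ <= X]addrA lerDl; apply: sumr_ge0 => y _.
by have /andP[cy0 cty] := ct y; have /andP[cx0 ctx] := ct x; rewrite subr_ge0 ler_pM.
Qed.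

Lemma sumr_sqr_le_sqr_sum (I : finType) (F : I -> K) :
  (forall i, 0 <= F i) -> \sum_i F i ^+ 2 <= (\sum_i F i) ^+ 2.
Proof.
move=> F_ge0; rewrite expr2 mulr_suml; apply: ler_sum => i _.
rewrite mulr_sumr (bigD1 i) //= expr2 lerDl.
by apply: sumr_ge0 => j _; apply: mulr_ge0.
Qed.

Lemma ler_mul_of_le_sqr (x a b : K) :
  0 <= x -> 0 <= a -> 0 <= b -> x <= a ^+ 2 -> x <= b ^+ 2 -> x <= a * b.
Proof.
move=> x0 a0 b0 xa xb; rewrite -(ler_pXn2r (ltn0Sn 1)) ?nnegrE ?mulr_ge0 //.
by rewrite exprMn expr2 ler_pM.
Qed.

Lemma sum_diag_offdiag (I : finType) (g : I -> I -> K) :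
  \sum_i \sum_j g i j = \sum_i g i i + \sum_i \sum_(j | i != j) g i j.
Proof.
rewrite -big_split; apply: eq_bigr => i _; rewrite (bigD1 i) //=.
by congr (_ + _); apply: eq_bigl => j; rewrite eq_sym.
Qed.

Lemma offdiag_sqr_sumB_ge (I : finType) (t c f : I -> I -> K) :
  (forall i j, 0 <= c i j <= t i j) -> (forall i j, 0 <= f i j <= t i j ^+ 2) ->
  (forall i j, f j i = f i j) -> (forall i j, c j i = c i j) ->
  (forall i, f i i <= c i i ^+ 2) ->
  2 * (\sum_i \sum_j f i j - \sum_i \sum_j c i j ^+ 2) <=
  (\sum_i \sum_(j | i != j) t i j) ^+ 2 - (\sum_i \sum_(j | i != j) c i j) ^+ 2.
Proof.
move=> ct ft fC cC fc.
have t_ge0 i j : 0 <= t i j by case/andP: (ct i j); apply: le_trans.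
rewrite -sumrB; under eq_bigr do rewrite -sumrB.
rewrite sum_diag_offdiag mulrDr -[X in _ <= X]add0r lerD //.
  by rewrite pmulr_rle0 // sumr_le0 // => i _; rewrite subr_le0.
rewrite !(pair_big_dep xpredT (fun i j => i != j)) /=.
apply: le_trans (@sqr_sumB_sqr_sum_ge_paired _ (fun p => p.1 != p.2)
  (fun p => (p.2, p.1)) (fun p => t p.1 p.2) (fun p => c p.1 p.2) _ _)
  => /= [|[i j] /= ij|[i j] //].
- rewrite mulr_sumr; apply: ler_sum => -[i j] _ /=.
  have /andP[fij_ge0 fij_le] := ft i j; have /andP[_ fji_le] := ft j i.
  rewrite fC in fji_le.
  rewrite cC mulr_natl mulr2n -!expr2 lerD ?lerD2r //.
  exact: ler_mul_of_le_sqr.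
- by rewrite eq_sym ij /= xpair_eqE negb_and eq_sym ij.
Qed.
End SquaredSums.

Section TraceNorm.
Variable R : realType.
Local Notation C := R[i].

Lemma adjmxM p q r (A : 'M[C]_(p, q)) (B : 'M[C]_(q, r)) :
  adjmx (A *m B) = adjmx B *m adjmx A.
Proof. by rewrite /adjmx trmx_mul map_mxM. Qed.

Lemma adjmxK p q (A : 'M[C]_(p, q)) : adjmx (adjmx A) = A.
Proof. exact: trmxCK. Qed.

Lemma mxtrace_adjmx n (A : 'M[C]_n) : \tr (adjmx A) = (\tr A)^*.
Proof. by rewrite /mxtrace rmorph_sum; apply: eq_bigr => k _; rewrite !mxE. Qed.

Lemma adjmx_mul_diagE p q (X : 'M[C]_(p, q)) k :
  (adjmx X *m X) k k = \sum_l `|X l k| ^+ 2.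
Proof. by rewrite mxE; apply: eq_bigr => l _; rewrite !mxE normCKC. Qed.

Lemma normr_diag_le_adjmx_mul n (X : 'M[C]_n) k : `|X k k| ^+ 2 <= (adjmx X *m X) k k.
Proof.
rewrite adjmx_mul_diagE (bigD1 k) //= lerDl.
by apply: sumr_ge0 => l _; apply: exprn_ge0.
Qed.

Lemma mxtrace_adjmx_mul p q (X : 'M[C]_(p, q)) :
  \tr (adjmx X *m X) = \sum_i \sum_j `|X i j| ^+ 2.
Proof.
by rewrite exchange_big; apply: eq_bigr => j _; rewrite adjmx_mul_diagE.
Qed.

Lemma diag_mx_formE n (d : 'rV[C]_n) (w : 'cV[C]_n) :
  (adjmx w *m diag_mx d *m w) 0 0 = \sum_k d 0 k * `|w k 0| ^+ 2.
Proof.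
rewrite mul_mx_diag mxE; apply: eq_bigr => k _.
by rewrite !mxE normCKC mulrA [_ * d 0 k]mulrC.
Qed.

Lemma unitarymx_adj_mul n (U : 'M[C]_n) : U \is unitarymx -> adjmx U *m U = 1%:M.
Proof. by move/unitarymxP/mulmx1C. Qed.

Lemma mxtrace_unitary_conj n (U A : 'M[C]_n) :
  U \is unitarymx -> \tr (adjmx U *m A *m U) = \tr A.
Proof. by move=> /unitarymxP UU; rewrite mxtrace_mulC mulmxA UU mul1mx. Qed.

Lemma mulmx_unitary_conj n (U A B : 'M[C]_n) : U \is unitarymx ->
  (adjmx U *m A *m U) *m (adjmx U *m B *m U) = adjmx U *m (A *m B) *m U.
Proof. by move=> U_unitary; rewrite !mulmxA mulmxtVK. Qed.

Lemma psdmx_conj p q (S : 'M[C]_(p, q)) (A : 'M[C]_p) :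
  psdmx A -> psdmx (adjmx S *m A *m S).
Proof.
move=> [A_herm A_form]; split; first by rewrite !adjmxM adjmxK A_herm mulmxA.
move=> v; have -> : adjmx v *m (adjmx S *m A *m S) *m v =
                    adjmx (S *m v) *m A *m (S *m v) by rewrite adjmxM !mulmxA.
exact: A_form.
Qed.

Lemma psdmx_diag n (d : 'rV[C]_n) : (forall k, 0 <= d 0 k) -> psdmx (diag_mx d).
Proof.
move=> d_ge0; split.
  apply/matrixP => i j; rewrite !mxE eq_sym.
  by case: eqP => [->|_]; rewrite ?mulr1n ?geC0_conj // !mulr0n conjC0.
move=> v; rewrite diag_mx_formE; apply: sumr_ge0 => k _.
by rewrite mulr_ge0 ?exprn_ge0.
Qed.

Lemma psdmx_adjmx_mul p q (X : 'M[C]_(p, q)) : psdmx (adjmx X *m X).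
Proof.
rewrite -[adjmx X]mulmx1 -diag_const_mx.
by apply: psdmx_conj; apply: psdmx_diag => k; rewrite mxE ler01.
Qed.

Lemma psdmx_spectral n (A : 'M[C]_n) : psdmx A -> exists U (d : 'rV[C]_n),
  [/\ U \is unitarymx, A = adjmx U *m diag_mx d *m U & forall k, 0 <= d 0 k].
Proof.
move=> [A_herm A_form].
have /orthomx_spectralP : A \is normalmx by apply/normalmxP; rewrite -/(adjmx A) A_herm.
rewrite invmx_unitary ?spectral_unitarymx //.
set U := spectralmx A; set d := spectral_diag A => AE.
have U_unitary : U \is unitarymx by apply: spectral_unitarymx.
exists U, d; split => // k.
have UAU : U *m A *m adjmx U = diag_mx d.
  by rewrite AE !mulmxA (unitarymxP U_unitary) mul1mx mulmxtVK.
have := A_form (adjmx (row k U)); rewrite adjmxK.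
have -> : (row k U *m A *m adjmx (row k U)) 0 0 = (U *m A *m adjmx U) k k.
  by rewrite !mxE; apply: eq_bigr => j _; rewrite -row_mul !mxE.
by rewrite UAU mxE eqxx mulr1n.
Qed.

Lemma psdmx_sqrt n (A : 'M[C]_n) : psdmx A -> exists P, psdmx P /\ P *m P = A.
Proof.
move=> /psdmx_spectral [U [d [U_unitary -> d_ge0]]].
pose s : 'rV[C]_n := \row_k sqrtC (d 0 k).
exists (adjmx U *m diag_mx s *m U); split.
  by apply/psdmx_conj/psdmx_diag => k; rewrite mxE sqrtC_ge0.
rewrite mulmx_unitary_conj // mulmx_diag; congr (_ *m diag_mx _ *m _).
by apply/rowP => k; rewrite !mxE -expr2 sqrtCK.
Qed.

Lemma msqrtP n (A : 'M[C]_n) : psdmx A -> psdmx (msqrt A) /\ msqrt A *m msqrt A = A.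
Proof. by move/psdmx_sqrt; apply: epsilon_spec. Qed.

Lemma psdmx_tr_ge0 n (P : 'M[C]_n) : psdmx P -> 0 <= \tr P.
Proof.
move=> /psdmx_spectral [U [d [U_unitary -> d_ge0]]].
by rewrite mxtrace_unitary_conj // mxtrace_diag sumr_ge0.
Qed.

Lemma psdmx_tr_sqr_le n (P : 'M[C]_n) : psdmx P -> \tr (P *m P) <= \tr P ^+ 2.
Proof.
move=> /psdmx_spectral [U [d [U_unitary -> d_ge0]]].
rewrite mulmx_unitary_conj // !mxtrace_unitary_conj // mulmx_diag !mxtrace_diag.
under eq_bigr do rewrite mxE -expr2.
exact: sumr_sqr_le_sqr_sum.
Qed.

(* In an eigenbasis of P, X becomes Y with Y^* Y = diag(d)^2, so |Y_kk| <= d_k. *)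
Lemma normr_tr_le_psd_sqrt n (X P : 'M[C]_n) :
  psdmx P -> P *m P = adjmx X *m X -> `|\tr X| <= \tr P.
Proof.
move=> /psdmx_spectral [U [d [U_unitary PE d_ge0]]] XX.
pose Y := U *m X *m adjmx U.
have trY : \tr X = \tr Y.
  by rewrite /Y mxtrace_mulC mulmxA unitarymx_adj_mul // mul1mx.
have YY : adjmx Y *m Y = diag_mx d *m diag_mx d.
  rewrite /Y !adjmxM adjmxK !mulmxA (mulmxKtV _ U_unitary) // -(mulmxA U) -XX PE.
  by rewrite mulmx_unitary_conj // !mulmxA (unitarymxP U_unitary) mul1mx mulmxtVK.
rewrite trY PE mxtrace_unitary_conj // mxtrace_diag.
apply: le_trans (ler_norm_sum _ _ _) _; apply: ler_sum => k _.
rewrite -(ler_pXn2r (ltn0Sn 1)) ?nnegrE //.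
apply: le_trans (normr_diag_le_adjmx_mul _ _) _.
by rewrite YY mulmx_diag mxE eqxx mulr1n mxE expr2.
Qed.

Lemma normr_tr_le_trnorm n (X : 'M[C]_n) : `|\tr X| <= trnorm X.
Proof.
by have [P_psd PP] := msqrtP (psdmx_adjmx_mul X); apply: normr_tr_le_psd_sqrt.
Qed.

Lemma mxtrace_adjmx_mul_le_trnorm p q (X : 'M[C]_(p, q)) :
  \tr (adjmx X *m X) <= trnorm X ^+ 2.
Proof.
have [P_psd PP] := msqrtP (psdmx_adjmx_mul X).
by rewrite /trnorm -{1}PP psdmx_tr_sqr_le.
Qed.

Section Blocks.
Variables (m n : nat) (rho : 'M[C]_(m * n)).

Lemma sum_mxvec_index (F : 'I_(m * n) -> C) :
  \sum_a F a = \sum_i \sum_k F (mxvec_index i k).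
Proof.
by rewrite pair_big (reindex _ (curry_mxvec_bij _ _)) /=; apply: eq_bigr => -[].
Qed.

Lemma blockB_conj i j : blockB rho i j =
  adjmx (colsub (mxvec_index i) 1%:M) *m rho *m colsub (mxvec_index j) 1%:M.
Proof.
have -> : adjmx (colsub (@mxvec_index m n i) 1%:M : 'M[C]_(m * n, n)) =
          rowsub (mxvec_index i) 1%:M.
  apply/matrixP => k a; rewrite !mxE (eq_sym a).
  by case: (mxvec_index i k == a); rewrite ?conjC0 ?conjC1.
rewrite mul_rowsub_mx mul1mx mulmx_colsub mulmx1.
by apply/matrixP => k l; rewrite !mxE.
Qed.

Lemma psdmx_blockB i : psdmx rho -> psdmx (blockB rho i i).
Proof. by rewrite blockB_conj; apply: psdmx_conj. Qed.

Hypothesis rho_herm : adjmx rho = rho.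

Lemma adjmx_blockB i j : adjmx (blockB rho i j) = blockB rho j i.
Proof. by rewrite !blockB_conj !adjmxM adjmxK rho_herm mulmxA. Qed.

Lemma normr_tr_blockC i j : `|\tr (blockB rho j i)| = `|\tr (blockB rho i j)|.
Proof. by rewrite -adjmx_blockB mxtrace_adjmx norm_conjC. Qed.

Lemma mxtrace_adjmx_mul_blockC i j :
  \tr (adjmx (blockB rho j i) *m blockB rho j i) =
  \tr (adjmx (blockB rho i j) *m blockB rho i j).
Proof. by rewrite -(adjmx_blockB i j) adjmxK mxtrace_mulC. Qed.

Lemma mxtrace_sqr_blocks :
  \tr (rho *m rho) = \sum_i \sum_j \tr (adjmx (blockB rho i j) *m blockB rho i j).
Proof.
rewrite -{1}rho_herm mxtrace_adjmx_mul sum_mxvec_index.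
under eq_bigr do under eq_bigr do rewrite sum_mxvec_index.
apply: eq_bigr => i _; rewrite exchange_big; apply: eq_bigr => j _.
by rewrite mxtrace_adjmx_mul; apply: eq_bigr => k _; apply: eq_bigr => l _; rewrite mxE.
Qed.

Lemma mxtrace_sqr_ptraceB : \tr (ptraceB rho *m ptraceB rho) =
  \sum_i \sum_j `|\tr (blockB rho i j)| ^+ 2.
Proof.
have ptraceB_herm : adjmx (ptraceB rho) = ptraceB rho.
  by apply/matrixP => i j; rewrite !mxE -mxtrace_adjmx adjmx_blockB.
rewrite -{1}ptraceB_herm mxtrace_adjmx_mul.
by apply: eq_bigr => i _; apply: eq_bigr => j _; rewrite mxE.
Qed.

End Blocks.

End TraceNorm.

Theorem proposition6 (R : realType) (m n : nat) (rho : 'M[R[i]]_(m * n)) :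
  density rho ->
  Cl1AB rho ^+ 2 - Cl1 (ptraceB rho) ^+ 2 >=
    2 * (\tr (rho *m rho) - \tr (ptraceB rho *m ptraceB rho)).
Proof.
move=> [rho_psd _]; have rho_herm := proj1 rho_psd.
have -> : Cl1 (ptraceB rho) = \sum_i \sum_(j | i != j) `|\tr (blockB rho i j)|.
  by apply: eq_bigr => i _; apply: eq_bigr => j _; rewrite mxE.
rewrite mxtrace_sqr_blocks // mxtrace_sqr_ptraceB //.
apply: offdiag_sqr_sumB_ge => [i j|i j|i j|i j|i].
- by rewrite normr_ge0 normr_tr_le_trnorm.
(* The goals see R[i] through its numDomainType structure, which [exact:] fails
   to unify with the lemmas' structure; plain [exact] checks by conversion. *)
- apply/andP; split.
    exact (psdmx_tr_ge0 (psdmx_adjmx_mul (blockB rho i j))).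
  exact (mxtrace_adjmx_mul_le_trnorm (blockB rho i j)).
- exact (mxtrace_adjmx_mul_blockC rho_herm i j).
- exact (normr_tr_blockC rho_herm i j).
- have Bi_psd := psdmx_blockB i rho_psd.
  rewrite (proj1 Bi_psd) ger0_norm; first exact (psdmx_tr_sqr_le Bi_psd).
  exact (psdmx_tr_ge0 Bi_psd).
Qed.
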